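(* Let $g(x)=\sum_{n\ge 1}\frac{2\,(4n+1)!}{(n+1)!\,(3n+2)!}\,x^n$, regarded as a formal power series. For integers $n\ge1$ and $r\ge 2$ define $A_r(n)=\frac{[x^n](g(x))^r}{[x^n]g(x)}$ and $B_r=\lim_{n\to\infty}A_r(n)$. Then for all integers $n\ge 1$: $$A_2(n)=\frac{10(n-1)(n^2+14n+12)}{3(3n+5)(3n+4)(n+2)},\qquad B_2=\frac{10}{27};$$ $$A_3(n)=\frac{5(n-1)(n-2)(5n^4+160n^3+1803n^2+3768n+2016)}{3(3n+8)(3n+5)(3n+7)(3n+4)(n+3)(n+2)},\qquad B_3=\frac{25}{243};$$ $$A_4(n)=\frac{20(n-1)(n-2)(n-3)(25n^6+1350n^5+31495n^4+347406n^3+1211092n^2+1580304n+665280)}{27(3n+11)(3n+8)(3n+5)(3n+10)(3n+7)(3n+4)(n+4)(n+3)(n+2)},\qquad B_4=\frac{500}{19683}.$$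
   Context: For a formal power series $f(x)$, $[x^n]f(x)$ denotes the coefficient of $x^n$ in $f(x)$. *)

From HB Require Import structures.
From mathcomp Require Import all_boot all_order all_algebra.
From mathcomp Require Import all_classical all_reals all_analysis.
Set Implicit Arguments. Unset Strict Implicit. Unset Printing Implicit Defensive.
Import Order.TTheory GRing.Theory Num.Theory.
Local Open Scope ring_scope.

Definition gcoef (n : nat) : rat :=
  if n == 0%N then 0
  else 2 * ((4 * n).+1)`!%:R / ((n.+1)`!%:R * ((3 * n).+2)`!%:R).

Definition gtrunc (N : nat) : {poly rat} := \poly_(i < N.+1) gcoef i.

(* [x^n] (g(x))^r : the coefficient of x^n in a power of a formal power
   series only depends on its coefficients of degree <= n, so it equals the
   coefficient of x^n in the r-th power of the degree-n truncation. *)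
Definition gpow_coef (r n : nat) : rat := ((gtrunc n) ^+ r)`_n.

Definition A (r n : nat) : rat := gpow_coef r n / gcoef n.

From HB Require Import structures.
From mathcomp Require Import all_boot all_order all_algebra.
From mathcomp Require Import all_classical all_reals all_analysis.
From mathcomp Require Import ring lra zify.
Import Order.TTheory GRing.Theory Num.Theory.
Import numFieldNormedType.Exports.
Local Open Scope classical_set_scope.
Local Open Scope ring_scope.

(** The series B = 1 + x B^4 of quaternary trees has the Raney numbers
    [x^n] B^j = j/(4n+j) * binomial(4n+j, n) as coefficients, and
    g = 2 B^2 - B^3 - 1.  Hence [x^n] g^r is a fixed integer combination of
    the numbers [x^n] B^j, each of which is the Fuss-Catalan number [x^n] B
    times an explicit rational function of n; so is [x^n] g, and A_r(n) is a
    rational function of n.  Its limit is read off by evaluating the reversed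
    numerator and denominator at 1/n -> 0. *)

Lemma natr_fact_neq0 (F : numDomainType) (n : nat) : (n`!%:R : F) != 0.
Proof. by rewrite pnatr_eq0 -lt0n fact_gt0. Qed.

Lemma natr_factS (F : nzSemiRingType) (n : nat) : ((n.+1)`!%:R : F) = (n%:R + 1) * n`!%:R.
Proof. by rewrite factS natrM natr1. Qed.

(* [raney p j n] is [x^n] B^j for B = 1 + x B^(p+1), i.e.
   j/((p+1)n+j) * binomial((p+1)n+j, n). *)
Definition raney (p j n : nat) : rat :=
  if j is i.+1 then i.+1%:R * (p.+1 * n + i)`!%:R / (n`!%:R * (p * n + i.+1)`!%:R)
  else (n == 0%N)%:R.

Lemma raney_neq0 p j n : raney p j.+1 n != 0.
Proof. by rewrite /= !mulf_neq0 ?invr_neq0 ?mulf_neq0 ?natr_fact_neq0 ?pnatr_eq0. Qed.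

Ltac solve_neq0 := match goal with
  | |- is_true (_ && _) => apply/andP; split; solve_neq0
  | |- is_true (_`!%:R != 0) => exact: natr_fact_neq0
  | |- is_true (raney _ _.+1 _ != 0) => exact: raney_neq0
  | |- _ => apply: lt0r_neq0; (lra || nra)
end.

Section Raney.
Variable p : nat.

Lemma raney0 j : raney p j 0 = 1.
Proof.
case: j => [//|i] /=; rewrite !muln0 !add0n fact0 mul1r natr_factS.
have i_ge0 := ler0n rat i.
by field; solve_neq0.
Qed.

(* Coefficient form of B^(i+1) = B^i + x B^(i+p+1). *)
Lemma raneyS i m : raney p i.+1 m.+1 = raney p i m.+1 + raney p (i + p.+1) m.
Proof.
have m_ge0 := ler0n rat m; have p_ge0 := ler0n rat p.
case: i => [|k] /=.
  rewrite addn0 add0r.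
  have -> : (p.+1 * m.+1 = (p.+1 * m + p).+1)%N by lia.
  have -> : (p * m.+1 + 1 = p * m + p.+1)%N by lia.
  rewrite !natr_factS -!natr1 ?natrD ?natrM.
  by field; solve_neq0.
have k_ge0 := ler0n rat k.
have -> : (p.+1 * m.+1 + k.+1 = (p.+1 * m + k + p.+1).+1)%N by lia.
have -> : (p.+1 * m.+1 + k = p.+1 * m + k + p.+1)%N by lia.
have -> : (p.+1 * m + (k + p.+1) = p.+1 * m + k + p.+1)%N by lia.
have -> : (p * m.+1 + k.+2 = (p * m + k + p.+1).+1)%N by lia.
have -> : (p * m.+1 + k.+1 = p * m + k + p.+1)%N by lia.
have -> : (p * m + (k + p.+1).+1 = (p * m + k + p.+1).+1)%N by lia.
rewrite !natr_factS -!natr1 ?natrD ?natrM.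
by field; solve_neq0.
Qed.

Lemma raneySS j n : raney p j.+2 n =
  raney p j.+1 n * ((j.+2)%:R * (p.+1 * n + j.+1)%:R) / ((j.+1)%:R * (p * n + j.+2)%:R).
Proof.
rewrite /= !addnS !natr_factS -!natr1 ?natrD ?natrM.
have j_ge0 := ler0n rat j; have n_ge0 := ler0n rat n; have p_ge0 := ler0n rat p.
by field; solve_neq0.
Qed.

Lemma raney_conv n a b :
  \sum_(k < n.+1) raney p a k * raney p b (n - k) = raney p (a + b) n.
Proof.
elim/ltn_ind: n a b => n IHn a b.
elim: a b => [|a IHa] b.
  rewrite big_ord_recl /= subn0 mul1r big1 ?addr0 // => i _.
  by rewrite /= mul0r.
case: n IHn IHa => [|m] IHn IHa.
  by rewrite big_ord1 subn0 !raney0 mulr1.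
rewrite big_ord_recl raney0 mul1r subn0.
under eq_bigr => i _ do rewrite lift0 subSS raneyS mulrDl.
rewrite big_split addrA.
have -> : raney p b m.+1 + \sum_(i < m.+1) raney p a i.+1 * raney p b (m - i)
          = raney p (a + b) m.+1.
  by rewrite -IHa [in RHS]big_ord_recl raney0 mul1r subn0.
by rewrite (IHn m (ltnSn m)) addSn raneyS addnAC.
Qed.

Definition raney_poly (N : nat) : {poly rat} := \poly_(i < N.+1) raney p 1 i.

Lemma coef_raney_poly_expr N j n : (n <= N)%N -> (raney_poly N ^+ j)`_n = raney p j n.
Proof.
elim: j n => [|j IHj] n le_nN; first by rewrite expr0 coef1.
rewrite exprS coefM -(raney_conv n 1 j); apply: eq_bigr => i _.
rewrite coef_poly IHj; last exact: leq_trans (leq_subr i n) le_nN.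
by rewrite (leq_trans (ltn_ord i) _).
Qed.

End Raney.

Lemma coef_expr_eq (R : nzSemiRingType) (P Q : {poly R}) r n :
  (forall i, (i <= n)%N -> P`_i = Q`_i) -> (P ^+ r)`_n = (Q ^+ r)`_n.
Proof.
elim: r n => [|r IHr] n eqPQ; first by rewrite !expr0.
rewrite !exprS !coefM; apply: eq_bigr => i _.
rewrite eqPQ -1?ltnS // (IHr (n - i)%N) // => k le_k.
by apply: eqPQ; exact: leq_trans le_k (leq_subr i n).
Qed.

Lemma gcoefE n : (0 < n)%N ->
  gcoef n = raney 3 1 n * (2 * (4 * n%:R + 1) / ((n%:R + 1) * (3 * n%:R + 2))).
Proof.
move=> n_gt0; rewrite /gcoef gt_eqF //= mul1r addn0 addn1.
rewrite !natr_factS -!natr1 ?natrD ?natrM.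
have n_ge0 := ler0n rat n.
by field; solve_neq0.
Qed.

Lemma gcoef_raney i : gcoef i = raney 3 2 i *+ 2 - raney 3 3 i - (i == 0%N)%:R.
Proof.
case: (posnP i) => [->|i_gt0]; first by rewrite !raney0 /gcoef /=; ring.
rewrite subr0 gcoefE // !raneySS -mulr_natr -!natr1 ?natrD ?natrM.
have i_ge0 := ler0n rat i.
by field; solve_neq0.
Qed.

Definition g_raney_poly (N : nat) : {poly rat} :=
  raney_poly 3 N ^+ 2 *+ 2 - raney_poly 3 N ^+ 3 - 1.

Lemma gpow_coefE r n : gpow_coef r n = (g_raney_poly n ^+ r)`_n.
Proof.
apply: coef_expr_eq => i le_in.
by rewrite coef_poly ltnS le_in gcoef_raney !coefB coefMn coef1 !coef_raney_poly_expr.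
Qed.

Lemma A_raney r n : (0 < n)%N ->
  A r n = (g_raney_poly n ^+ r)`_n
          / (raney 3 1 n * (2 * (4 * n%:R + 1) / ((n%:R + 1) * (3 * n%:R + 2)))).
Proof. by move=> n_gt0; rewrite /A gpow_coefE gcoefE. Qed.

Lemma A2E n : (1 <= n)%N -> A 2 n = 10 * (n%:R - 1) * (n%:R ^+ 2 + 14 * n%:R + 12)
                 / (3 * (3 * n%:R + 5) * (3 * n%:R + 4) * (n%:R + 2)).
Proof.
move=> n_gt0; rewrite A_raney //.
have -> : g_raney_poly n ^+ 2 = 1 - raney_poly 3 n ^+ 2 *+ 4 + raney_poly 3 n ^+ 3 *+ 2
    + raney_poly 3 n ^+ 4 *+ 4 - raney_poly 3 n ^+ 5 *+ 4 + raney_poly 3 n ^+ 6.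
  by rewrite /g_raney_poly; ring.
rewrite ?coefD ?coefB ?coefN ?coefMn coef1 gt_eqF // mulr0n !coef_raney_poly_expr //.
rewrite !raneySS ?natrD ?natrM.
have n_ge1 : 1 <= n%:R :> rat by rewrite ler1n.
by field; solve_neq0.
Qed.

Lemma A3E n : (1 <= n)%N -> A 3 n = 5 * (n%:R - 1) * (n%:R - 2)
                   * (5 * n%:R ^+ 4 + 160 * n%:R ^+ 3 + 1803 * n%:R ^+ 2
                      + 3768 * n%:R + 2016)
                 / (3 * (3 * n%:R + 8) * (3 * n%:R + 5) * (3 * n%:R + 7)
                      * (3 * n%:R + 4) * (n%:R + 3) * (n%:R + 2)).
Proof.
move=> n_gt0; rewrite A_raney //.
have -> : g_raney_poly n ^+ 3 = - 1 + raney_poly 3 n ^+ 2 *+ 6 - raney_poly 3 n ^+ 3 *+ 3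
    - raney_poly 3 n ^+ 4 *+ 12 + raney_poly 3 n ^+ 5 *+ 12 + raney_poly 3 n ^+ 6 *+ 5
    - raney_poly 3 n ^+ 7 *+ 12 + raney_poly 3 n ^+ 8 *+ 6 - raney_poly 3 n ^+ 9.
  by rewrite /g_raney_poly; ring.
rewrite ?coefD ?coefB ?coefN ?coefMn coef1 gt_eqF // mulr0n !coef_raney_poly_expr //.
rewrite !raneySS ?natrD ?natrM.
have n_ge1 : 1 <= n%:R :> rat by rewrite ler1n.
by field; solve_neq0.
Qed.

Lemma A4E n : (1 <= n)%N -> A 4 n = 20 * (n%:R - 1) * (n%:R - 2) * (n%:R - 3)
                   * (25 * n%:R ^+ 6 + 1350 * n%:R ^+ 5 + (31 * 1000 + 495) * n%:R ^+ 4
                      + (347 * 1000 + 406) * n%:R ^+ 3 + (1211 * 1000 + 92) * n%:R ^+ 2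
                      + (1580 * 1000 + 304) * n%:R + (665 * 1000 + 280))
                 / (27 * (3 * n%:R + 11) * (3 * n%:R + 8) * (3 * n%:R + 5)
                      * (3 * n%:R + 10) * (3 * n%:R + 7) * (3 * n%:R + 4)
                      * (n%:R + 4) * (n%:R + 3) * (n%:R + 2)).
Proof.
move=> n_gt0; rewrite A_raney //.
have -> : g_raney_poly n ^+ 4 = 1 - raney_poly 3 n ^+ 2 *+ 8 + raney_poly 3 n ^+ 3 *+ 4
    + raney_poly 3 n ^+ 4 *+ 24 - raney_poly 3 n ^+ 5 *+ 24 - raney_poly 3 n ^+ 6 *+ 26
    + raney_poly 3 n ^+ 7 *+ 48 - raney_poly 3 n ^+ 8 *+ 8 - raney_poly 3 n ^+ 9 *+ 28
    + raney_poly 3 n ^+ 10 *+ 24 - raney_poly 3 n ^+ 11 *+ 8 + raney_poly 3 n ^+ 12.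
  by rewrite /g_raney_poly; ring.
rewrite ?coefD ?coefB ?coefN ?coefMn coef1 gt_eqF // mulr0n !coef_raney_poly_expr //.
rewrite !raneySS ?natrD ?natrM.
have n_ge1 : 1 <= n%:R :> rat by rewrite ler1n.
by field; solve_neq0.
Qed.

Lemma cvg_horner_ratio_harmonic (R : realType) (P Q : {poly R}) (f : R^nat) (l : R) :
  Q.[0] != 0 -> l = P.[0] / Q.[0] ->
  (forall n, f n.+1 = P.[n.+1%:R^-1] / Q.[n.+1%:R^-1]) -> f @ \oo --> l.
Proof.
move=> Q0_neq0 -> fE; rewrite -cvg_shiftS.
have -> : [sequence f n.+1]_n = (fun n => (horner P \o harmonic) n / (horner Q \o harmonic) n).
  by apply/funext => n /=; rewrite fE.
have cvg_horner (S : {poly R}) : (horner S \o harmonic) @ \oo --> S.[0].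
  by apply: continuous_cvg; [exact: continuous_horner | exact: cvg_harmonic].
exact: cvgM (cvg_horner P) (cvgV Q0_neq0 (cvg_horner Q)).
Qed.

Lemma cvg_A2 (R : realType) : (fun n : nat => (ratr (A 2 n) : R)) @ \oo --> (10 / 27 : R).
Proof.
apply: (@cvg_horner_ratio_harmonic R
  (10%:P * (1%:P - 'X) * (1%:P + 'X * (14%:P + 12%:P * 'X)))
  (3%:P * (3%:P + 5%:P * 'X) * (3%:P + 4%:P * 'X) * (1%:P + 2%:P * 'X))).
- by rewrite !(hornerM, hornerD, hornerN, hornerC, hornerX); solve_neq0.
- by rewrite !(hornerM, hornerD, hornerN, hornerC, hornerX); field.
move=> n; rewrite A2E // !(hornerM, hornerD, hornerN, hornerC, hornerX).
have n_ge0 := ler0n R n.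
by field; solve_neq0.
Qed.

Lemma cvg_A3 (R : realType) : (fun n : nat => (ratr (A 3 n) : R)) @ \oo --> (25 / 243 : R).
Proof.
apply: (@cvg_horner_ratio_harmonic R
  (5%:P * (1%:P - 'X) * (1%:P - 2%:P * 'X) *
     (5%:P + 'X * (160%:P + 'X * (1803%:P + 'X * (3768%:P + 2016%:P * 'X)))))
  (3%:P * (3%:P + 8%:P * 'X) * (3%:P + 5%:P * 'X) * (3%:P + 7%:P * 'X) *
     (3%:P + 4%:P * 'X) * (1%:P + 3%:P * 'X) * (1%:P + 2%:P * 'X))).
- by rewrite !(hornerM, hornerD, hornerN, hornerC, hornerX); solve_neq0.
- by rewrite !(hornerM, hornerD, hornerN, hornerC, hornerX); field.
move=> n; rewrite A3E // !(hornerM, hornerD, hornerN, hornerC, hornerX).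
have n_ge0 := ler0n R n.
by field; solve_neq0.
Qed.

Lemma cvg_A4 (R : realType) :
  (fun n : nat => (ratr (A 4 n) : R)) @ \oo --> (500 / (19 * 1000 + 683) : R).
Proof.
apply: (@cvg_horner_ratio_harmonic R
  (20%:P * (1%:P - 'X) * (1%:P - 2%:P * 'X) * (1%:P - 3%:P * 'X) *
     (25%:P + 'X * (1350%:P + 'X * ((31 * 1000 + 495)%:P + 'X * ((347 * 1000 + 406)%:P
      + 'X * ((1211 * 1000 + 92)%:P + 'X * ((1580 * 1000 + 304)%:P
      + (665 * 1000 + 280)%:P * 'X)))))))
  (27%:P * (3%:P + 11%:P * 'X) * (3%:P + 8%:P * 'X) * (3%:P + 5%:P * 'X) *
     (3%:P + 10%:P * 'X) * (3%:P + 7%:P * 'X) * (3%:P + 4%:P * 'X) *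
     (1%:P + 4%:P * 'X) * (1%:P + 3%:P * 'X) * (1%:P + 2%:P * 'X))).
- by rewrite !(hornerM, hornerD, hornerN, hornerC, hornerX); solve_neq0.
- by rewrite !(hornerM, hornerD, hornerN, hornerC, hornerX); field.
move=> n; rewrite A4E // !(hornerM, hornerD, hornerN, hornerC, hornerX).
have n_ge0 := ler0n R n.
by field; solve_neq0.
Qed.

Theorem mainTheorem3 (R : realType) :
  (forall n : nat, (1 <= n)%N ->
         A 2 n = 10 * (n%:R - 1) * (n%:R ^+ 2 + 14 * n%:R + 12)
                 / (3 * (3 * n%:R + 5) * (3 * n%:R + 4) * (n%:R + 2)))
   /\ (fun n : nat => (ratr (A 2 n) : R)) @ \oo --> (10 / 27 : R)
   /\ (forall n : nat, (1 <= n)%N ->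
         A 3 n = 5 * (n%:R - 1) * (n%:R - 2)
                   * (5 * n%:R ^+ 4 + 160 * n%:R ^+ 3 + 1803 * n%:R ^+ 2
                      + 3768 * n%:R + 2016)
                 / (3 * (3 * n%:R + 8) * (3 * n%:R + 5) * (3 * n%:R + 7)
                      * (3 * n%:R + 4) * (n%:R + 3) * (n%:R + 2)))
   /\ (fun n : nat => (ratr (A 3 n) : R)) @ \oo --> (25 / 243 : R)
   /\ (forall n : nat, (1 <= n)%N ->
         A 4 n = 20 * (n%:R - 1) * (n%:R - 2) * (n%:R - 3)
                   * (25 * n%:R ^+ 6 + 1350 * n%:R ^+ 5 + (31 * 1000 + 495) * n%:R ^+ 4
                      + (347 * 1000 + 406) * n%:R ^+ 3 + (1211 * 1000 + 92) * n%:R ^+ 2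
                      + (1580 * 1000 + 304) * n%:R + (665 * 1000 + 280))
                 / (27 * (3 * n%:R + 11) * (3 * n%:R + 8) * (3 * n%:R + 5)
                      * (3 * n%:R + 10) * (3 * n%:R + 7) * (3 * n%:R + 4)
                      * (n%:R + 4) * (n%:R + 3) * (n%:R + 2)))
   /\ (fun n : nat => (ratr (A 4 n) : R)) @ \oo --> (500 / (19 * 1000 + 683) : R).
Proof.
split; first exact: A2E.
split; first exact: cvg_A2.
split; first exact: A3E.
split; first exact: cvg_A3.
split; first exact: A4E.
exact: cvg_A4.
Qed.
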